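(* There is a function $g:\mathbb{N}\to\mathbb{N}$ such that $\mathrm{tpw}(G)\le g(\mathrm{ecrw}(G))$ for every graph $G$. Consequently, together with $\mathrm{ecrw}(G)\le\mathrm{tpw}(G)$, edge-crossing width and tree-partition-width are functionally equivalent.
   Context: A tree-cut decomposition of a graph $G$ is a pair $\mathcal{T}=(T,\{X_t\}_{t\in V(T)})$ where $T$ is a tree and the bags $X_t\subseteq V(G)$ are pairwise disjoint (possibly empty) with $\bigcup_{t\in V(T)}X_t=V(G)$. For a node $t$ of $T$, let $T_1,\dots,T_m$ be the connected components of $T-t$ and $Z_i=\bigcup_{s\in V(T_i)}X_s$; $\mathrm{cross}_{\mathcal{T}}(t)$ is the number of edges of $G$ whose two endpoints lie in two distinct sets among $Z_1,\dots,Z_m$ (if $T$ has one node, $\mathrm{cross}_{\mathcal T}(t)=0$). The crossing number of $\mathcal{T}$ is $\max_{t}\mathrm{cross}_{\mathcal{T}}(t)$, and the thickness of $\mathcal{T}$ is $\max_t|X_t|$. The edge-crossing width of $\mathcal T$ is the maximum of its crossing number and its thickness, and $\mathrm{ecrw}(G)$ is the minimum edge-crossing width over all tree-cut decompositions of $G$. A tree-partition of $G$ is a tree-cut decomposition $(T,\{X_t\})$ such that for every edge $uv$ of $G$, either $u,v$ lie in the same bag, or $u\in X_{t_1}$, $v\in X_{t_2}$ for some edge $t_1t_2$ of $T$. The tree-partition-width $\mathrm{tpw}(G)$ is the minimum thickness over all tree-partitions of $G$. *)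

From mathcomp Require Import all_boot.
From mathcomp Require Import boolp.

Set Implicit Arguments.
Unset Strict Implicit.
Unset Printing Implicit Defensive.

(* A (finite simple) graph G is given by a finType V of vertices and a
   symmetric irreflexive adjacency relation e : rel V (hypotheses of the theorem). *)

(* T is a tree: nonempty, simple (symmetric, irreflexive), connected, and has
   exactly n-1 edges (2(n-1) ordered adjacent pairs). *)
Definition is_tree (n : nat) (a : rel 'I_n) : Prop :=
  [/\ 0 < n, symmetric a, irreflexive a,
      (forall s t, connect a s t) &
      #|[set p : 'I_n * 'I_n | a p.1 p.2]| = 2 * (n - 1)].

Definition is_tcd (V : finType) (n : nat) (a : rel 'I_n) (X : 'I_n -> {set V}) : Prop :=
  [/\ is_tree a,
      (forall s t, s != t -> [disjoint X s & X t]) &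
      (forall v : V, exists t, v \in X t)].

Definition del_rel (n : nat) (a : rel 'I_n) (t : 'I_n) : rel 'I_n :=
  fun x y => [&& a x y, x != t & y != t].

Definition crosses (V : finType) (n : nat) (a : rel 'I_n) (X : 'I_n -> {set V})
    (t : 'I_n) (u v : V) : bool :=
  [exists s : 'I_n, exists s' : 'I_n,
     [&& u \in X s, v \in X s', s != t, s' != t &
         ~~ connect (del_rel a t) s s']].

Definition cross (V : finType) (e : rel V) (n : nat) (a : rel 'I_n)
    (X : 'I_n -> {set V}) (t : 'I_n) : nat :=
  #|[set S : {set V} | [exists u : V, exists v : V,
        [&& e u v, S == [set u; v] & crosses a X t u v]]]|.

Definition crossing_number (V : finType) (e : rel V) (n : nat) (a : rel 'I_n)
    (X : 'I_n -> {set V}) : nat :=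
  \max_(t < n) cross e a X t.

Definition thickness (V : finType) (n : nat) (X : 'I_n -> {set V}) : nat :=
  \max_(t < n) #|X t|.

Definition ec_width (V : finType) (e : rel V) (n : nat) (a : rel 'I_n)
    (X : 'I_n -> {set V}) : nat :=
  maxn (crossing_number e a X) (thickness X).

Definition ecrw_le (V : finType) (e : rel V) (k : nat) : Prop :=
  exists n (a : rel 'I_n) (X : 'I_n -> {set V}), is_tcd a X /\ ec_width e a X <= k.

Definition is_tree_partition (V : finType) (e : rel V) (n : nat) (a : rel 'I_n)
    (X : 'I_n -> {set V}) : Prop :=
  is_tcd a X /\
  (forall (u v : V) (s s' : 'I_n), e u v -> u \in X s -> v \in X s' ->
     s = s' \/ a s s').

Definition tpw_le (V : finType) (e : rel V) (k : nat) : Prop :=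
  exists n (a : rel 'I_n) (X : 'I_n -> {set V}),
    is_tree_partition e a X /\ thickness X <= k.

Lemma trivial_tree_partition (V : finType) (e : rel V) :
  is_tree_partition e (fun _ _ : 'I_1 => false) (fun _ => [set: V]).
Proof.
split.
  split.
  - split => //.
    + by move=> s t; rewrite (ord1 s) (ord1 t) connect0.
    + apply/eqP; rewrite cards_eq0; apply/eqP/setP => p; by rewrite !inE.
  - by move=> s t; rewrite (ord1 s) (ord1 t) eqxx.
  - by move=> v; exists ord0; rewrite inE.
by move=> u v s s' _ _ _; left; rewrite (ord1 s) (ord1 s').
Qed.

Lemma ecrw_ex (V : finType) (e : rel V) : exists k, `[< ecrw_le e k >].
Proof.
exists (ec_width e (fun _ _ : 'I_1 => false) (fun _ => [set: V])).
apply/asboolP; exists 1, (fun _ _ => false), (fun _ => [set: V]); split => //.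
by case: (trivial_tree_partition e).
Qed.

Lemma tpw_ex (V : finType) (e : rel V) : exists k, `[< tpw_le e k >].
Proof.
exists (thickness (fun _ : 'I_1 => [set: V])).
apply/asboolP; exists 1, (fun _ _ => false), (fun _ => [set: V]); split => //.
exact: trivial_tree_partition.
Qed.

Definition ecrw (V : finType) (e : rel V) : nat := ex_minn (ecrw_ex e).
Definition tpw (V : finType) (e : rel V) : nat := ex_minn (tpw_ex e).

(* A tree-partition has crossing number 0, so ecrw(G) <= tpw(G).  For the
   converse, fix a tree-cut decomposition (T, X) of edge-crossing width k and
   root T.  Call two nodes of T adjacent (bag_rel) when an edge of G joins
   their bags.  For a node z, the nodes adjacent to another component of
   T - z ("crossers of z") are bags of end points of edges crossing at z, so
   there are at most 2k of them.  The core of the proof builds, for any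
   graph h on the nodes of a rooted tree whose crosser sets have size at
   most K, a tree-partition of h with parts of bounded size: a separator
   lemma cuts off a bounded root part, the number of
   nodes of each remaining component adjacent to it stays bounded, and the
   components are partitioned recursively and hung below the root part.
   Merging the bags of X along this partition of T gives a tree-partition
   of G of width at most tpw_bound k. *)

From mathcomp Require Import all_boot zify.
From mathcomp Require boolp.

Set Implicit Arguments.
Unset Strict Implicit.
Unset Printing Implicit Defensive.

Lemma path_enter (T : Type) (e : rel T) (P : pred T) x s :
  path e x s -> ~~ P x -> P (last x s) -> exists u v, [/\ e u v, ~~ P u & P v].
Proof.
elim: s x => [|y s IH] x /=; first by move=> _ /negP nPx /nPx.
case/andP=> exy pys nPx; case: (boolP (P y)) => Py; first by exists x, y.
exact: IH.
Qed.

Lemma card_bigcup_le (I T : finType) (P : {pred I}) (F : I -> {set T}) :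
  #|\bigcup_(i in P) F i| <= \sum_(i in P) #|F i|.
Proof.
elim/big_rec2: _ => [|i n U _ IH]; first by rewrite cards0.
by rewrite (leq_trans (leq_of_leqif (leq_card_setU _ _))) // leq_add2l.
Qed.

Lemma card_bigcup_leK (I T : finType) (P : {set I}) (F : I -> {set T}) K :
  (forall i, #|F i| <= K) -> #|\bigcup_(i in P) F i| <= #|P| * K.
Proof.
move=> FK; apply: leq_trans (card_bigcup_le _ _) _.
by rewrite -sum_nat_const; apply: leq_sum.
Qed.

Lemma connect_const (T : finType) (e : rel T) (T' : eqType) (f : T -> T') x y :
  (forall u v, e u v -> f u = f v) -> connect e x y -> f x = f y.
Proof.
move=> fe /connectP [s ps ->]; elim: s x ps => //= z s IH x /andP [exz pzs].
by rewrite (fe _ _ exz) (IH _ pzs).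
Qed.

Lemma card_imset_connected (T T' : finType) (h : rel T) (C : {set T}) (f : T -> T') :
  (forall x y, x \in C -> y \in C ->
     connect [rel u v | [&& h u v, u \in C & v \in C]] x y) ->
  #|f @: C| <= 1 + #|[set x in C | [exists y in C, h y x && (f y != f x)]]|.
Proof.
move=> Cconn; case: (set_0Vmem C) => [->|[c0 c0C]]; first by rewrite imset0 cards0.
set Bd := [set x in C | _].
have sub : f @: C \subset f c0 |: f @: Bd.
  apply/subsetP => _ /imsetP [c cC ->]; rewrite in_setU1.
  case: (eqVneq (f c) (f c0)) => //= ne.
  have /connectP [s ps lst] := Cconn _ _ c0C cC.
  have := @path_enter _ _ (fun z => f z == f c) _ _ ps.
  rewrite -lst eqxx eq_sym ne => /(_ isT isT) [u [v [/and3P [huv uC vC] nPu Pv]]].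
  apply/imsetP; exists v; last by rewrite (eqP Pv).
  by rewrite inE vC; apply/existsP; exists u; rewrite uC huv (eqP Pv).
rewrite (leq_trans (subset_leq_card sub)) // cardsU1.
by rewrite leq_add ?leq_b1 ?leq_imset_card.
Qed.

Section Components.
Variables (T : finType) (h : rel T) (U : {set T}).
Hypothesis hsym : symmetric h.

Definition induced : rel T := [rel x y | [&& h x y, x \in U & y \in U]].
Definition component (x : T) : {set T} := [set y in U | connect induced x y].

Lemma induced_sym : symmetric induced.
Proof. by move=> x y; rewrite /induced /= hsym; case: (x \in U); case: (y \in U); rewrite ?andbF. Qed.

Lemma componentE x y : (y \in component x) = (y \in U) && connect induced x y.
Proof. by rewrite inE. Qed.

Lemma componentU x : component x \subset U.
Proof. by apply/subsetP => y; rewrite componentE => /andP []. Qed.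

Lemma component_self x : x \in U -> x \in component x.
Proof. by move=> xU; rewrite componentE xU connect0. Qed.

Lemma component_edge x y : x \in U -> y \in U -> h x y -> y \in component x.
Proof. by move=> xU yU hxy; rewrite componentE yU; apply: connect1; rewrite /induced /= hxy xU yU. Qed.

Lemma component_eq x y : y \in component x -> component y = component x.
Proof.
rewrite componentE => /andP [_ cxy]; apply/setP => z; rewrite !componentE.
case: (z \in U) => //=; apply/idP/idP => [|cxz]; first exact: connect_trans.
by apply: connect_trans cxz; rewrite (sym_connect_sym induced_sym).
Qed.

Lemma component_connected x y y' : y \in component x -> y' \in component x ->
  connect [rel u v | [&& h u v, u \in component x & v \in component x]] y y'.
Proof.
move=> yC y'C; have /connectP [s ps ->] : connect induced y y'.
  move: yC y'C; rewrite !componentE => /andP [_ cxy] /andP [_ cxy'].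
  by apply: connect_trans cxy'; rewrite (sym_connect_sym induced_sym).
elim: s y yC ps {y'C} => [|z s IH] y yC /=; first by rewrite connect0.
case/andP => /and3P [hyz _ zU] pzs.
have zC : z \in component x by rewrite -(component_eq yC) component_edge // (subsetP (componentU x)).
by apply: connect_trans (IH z zC pzs); apply: connect1; rewrite /= hyz yC zC.
Qed.

End Components.

(* For a set S of nodes, ctop S x is the highest node reachable
   from x by climbing towards r without entering S: for x outside S it is
   the top of the component of T - S containing x. *)
Section RootedTree.
Variables (N : finType) (r : N) (p : N -> N) (d : N -> nat).
Hypothesis p_root : p r = r.
Hypothesis d_root : d r = 0.
Hypothesis d_parent : forall x, x != r -> d x = (d (p x)).+1.

Lemma depth0 x : (d x == 0) = (x == r).
Proof. by case: (eqVneq x r) => [->|/d_parent ->]; rewrite ?d_root. Qed.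

Lemma depth_parent x : d (p x) = (d x).-1.
Proof. by case: (eqVneq x r) => [->|/d_parent ->]; rewrite ?p_root ?d_root. Qed.

Lemma parent_neq x : x != r -> p x != x.
Proof. by move=> /d_parent dx; apply/eqP => px; move: dx; rewrite px; lia. Qed.

Lemma depth_ind (P : N -> Prop) :
  (forall x, (forall y, d y < d x -> P y) -> P x) -> forall x, P x.
Proof.
move=> IH x; have [m] := ubnP (d x); elim: m x => // m IHm x dx.
by apply: IH => y dy; apply: IHm; lia.
Qed.

Definition anc (a y : N) : Prop := exists i, iter i p y = a.

Lemma depth_iter i y : d (iter i p y) = d y - i.
Proof. by elim: i => [|i IH] /=; rewrite ?subn0 // depth_parent IH; lia. Qed.

Lemma iter_root i y : d y <= i -> iter i p y = r.
Proof. by move=> yi; apply/eqP; rewrite -depth0 depth_iter; lia. Qed.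

Lemma anc_refl y : anc y y. Proof. by exists 0. Qed.
Lemma anc_parent y : anc (p y) y. Proof. by exists 1. Qed.
Lemma anc_root y : anc r y. Proof. by exists (d y); rewrite iter_root. Qed.

Lemma anc_trans a b c : anc a b -> anc b c -> anc a c.
Proof. by move=> [i <-] [j <-]; exists (i + j); rewrite iterD. Qed.

Lemma anc_depth a y : anc a y -> d a <= d y.
Proof. by move=> [i <-]; rewrite depth_iter leq_subr. Qed.

Lemma anc_eq a y : anc a y -> d y <= d a -> a = y.
Proof.
move=> [[|i] <-] //=; rewrite depth_parent depth_iter.
case: (eqVneq y r) => [->|/d_parent]; first by rewrite iter_root ?p_root ?d_root.
lia.
Qed.

Lemma anc_lt a y : anc a y -> a != y -> d a < d y.
Proof.
by move=> ay ne; rewrite ltnNge; apply: contra ne => /(anc_eq ay) ->.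
Qed.

Lemma anc_up a y : anc a y -> a != y -> anc a (p y).
Proof. by move=> [[|i] <-] /=; rewrite ?eqxx // => _; exists i; rewrite -iterSr. Qed.

Definition ancb (a y : N) : bool := [exists i : 'I_(d y).+1, iter i p y == a].

Lemma ancP a y : reflect (anc a y) (ancb a y).
Proof.
apply: (iffP existsP) => [[i /eqP <-]|[i <-]]; first by exists i.
case: (leqP i (d y)) => iy; first by exists (Ordinal (iy : i < (d y).+1)).
by exists ord_max; rewrite /= !iter_root // ltnW.
Qed.

Fixpoint climb (S : {set N}) (m : nat) (x : N) : N :=
  if m is m'.+1 then (if p x \in S then x else climb S m' (p x)) else x.

Definition ctop (S : {set N}) (x : N) : N := climb S (d x) x.

Lemma ctopE (S : {set N}) x :
  ctop S x = if (x == r) || (p x \in S) then x else ctop S (p x).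
Proof.
rewrite /ctop; case: (eqVneq x r) => [->|xr]; first by rewrite d_root.
by rewrite (d_parent xr).
Qed.

Lemma ctop_self (S : {set N}) x : x != r -> p x \in S -> ctop S x = x.
Proof. by move=> xr pS; rewrite ctopE pS orbT. Qed.

Lemma ctop_step (S : {set N}) x : x != r -> p x \notin S -> ctop S x = ctop S (p x).
Proof. by move=> xr pS; rewrite ctopE (negbTE xr) (negbTE pS). Qed.

Lemma ctop_anc (S : {set N}) x : anc (ctop S x) x.
Proof.
elim/depth_ind: x => x IH; rewrite ctopE.
case: ifP => [_|/norP [xr _]]; first exact: anc_refl.
by apply: anc_trans (IH _ _) (anc_parent _); rewrite (d_parent xr).
Qed.

Lemma ctop_stop (S : {set N}) x : (ctop S x == r) || (p (ctop S x) \in S).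
Proof.
elim/depth_ind: x => x IH; rewrite ctopE.
by case: ifP => [//|/norP [xr _]]; apply: IH; rewrite (d_parent xr).
Qed.

Lemma ctop_sub (A B : {set N}) x : A \subset B -> ctop A x = ctop A (ctop B x).
Proof.
move=> AB; elim/depth_ind: x => x IH.
rewrite [ctop B x]ctopE; case: ifP => [//|/norP [xr pB]].
rewrite -IH ?(d_parent xr) // (ctop_step xr) //.
by apply: contra pB => /(subsetP AB).
Qed.

Lemma ctop_below (S : {set N}) z y : z \in S -> anc z y -> y \notin S ->
  anc z (ctop S y) /\ d z < d (ctop S y).
Proof.
move=> zS; elim/depth_ind: y => y IH zy yS.
have ne_zy : z != y by apply: contraNneq yS => <-.
have yr : y != r by rewrite -depth0 -lt0n (leq_trans _ (anc_lt zy ne_zy)).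
rewrite ctopE (negbTE yr) /=; case: ifP => pS; first by split=> //; exact: anc_lt.
by apply: IH; [rewrite (d_parent yr) | exact: anc_up | rewrite pS].
Qed.

Lemma ctop_notanc (Z : {set N}) t x : ~ anc t x -> ctop (t |: Z) x = ctop Z x.
Proof.
elim/depth_ind: x => x IH tx.
rewrite [LHS]ctopE [RHS]ctopE; case: (eqVneq x r) => [//|xr] /=.
rewrite in_setU1; have -> : (p x == t) = false.
  by apply: contra_notF tx => /eqP <-; exact: anc_parent.
case: (p x \in Z) => //=; apply: IH; first by rewrite (d_parent xr).
by move=> tpx; apply: tx; exact: anc_trans tpx (anc_parent _).
Qed.

Lemma ctop_separate (Z : {set N}) x y : x \notin Z -> y \notin Z ->
  (forall z, z \in Z -> ctop [set z] x = ctop [set z] y) -> ctop Z x = ctop Z y.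
Proof.
have [m] := ubnP (d x + d y); elim: m x y => // m IH x y dxy.
wlog le_yx : x y dxy / d y <= d x.
  move=> W xZ yZ sep; case: (leqP (d y) (d x)) => [|/ltnW] le; first exact: W.
  by symmetry; apply: W => //; [lia | move=> z /sep ->].
move=> xZ yZ sep; case: (eqVneq x y) => [->//|xy].
have xr : x != r.
  by apply: contraNneq xy => xr; move: le_yx; rewrite xr d_root leqn0 depth0 => /eqP ->.
case: (boolP (p x \in Z)) => pZ.
  have := sep _ pZ; rewrite ctop_self ?inE // => cx.
  have := ctop_anc [set p x] y; rewrite -cx => xy_anc.
  by move: xy; rewrite (anc_eq xy_anc le_yx) eqxx.
rewrite ctop_step //; apply: IH => //; first by rewrite (d_parent xr) in dxy; lia.
move=> z zZ; rewrite -sep // [ctop _ x]ctop_step // inE.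
by apply: contraNneq pZ => ->.
Qed.

Lemma ctop_tree_edge z x y : x != z -> y != z ->
  ((x != r) && (p x == y)) || ((y != r) && (p y == x)) ->
  ctop [set z] x = ctop [set z] y.
Proof.
move=> xz yz /orP [/andP [xr /eqP pxy]|/andP [yr /eqP pyx]].
  by rewrite (ctop_step xr) pxy // inE.
by rewrite [RHS](ctop_step yr) pyx // inE.
Qed.

(* Z is built greedily from a deepest node whose subtree contains
   more than m nodes of A. *)
Lemma separator (A : {set N}) m :
  exists Z : {set N}, #|Z| * m.+1 <= #|A| /\
    forall x, x \notin Z ->
      #|[set y in A | (y \notin Z) && (ctop Z y == ctop Z x)]| <= m.
Proof.
have [n] := ubnP #|A|; elim: n A => // n IH A An.
case: (leqP #|A| m) => Am.
  exists set0; rewrite cards0 mul0n; split => // x _.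
  by apply: leq_trans Am; apply/subset_leq_card/subsetP => y; rewrite inE => /andP [].
pose heavy t := m < #|[set y in A | ancb t y]|.
have heavy_r : heavy r.
  rewrite /heavy (_ : [set y in A | _] = A) //.
  by apply/setP => y; rewrite inE andb_idr // => _; apply/ancP/anc_root.
case: (@arg_maxnP _ r heavy d heavy_r) => t heavy_t deepest.
pose A' := [set y in A | ~~ ancb t y].
have cardA : #|A'| + #|[set y in A | ancb t y]| = #|A|.
  rewrite addnC -(cardsID [set y | ancb t y] A).
  by congr (_ + _); apply: eq_card => y; rewrite !inE andbC.
have [Z' [cardZ' smallZ']] := IH A' ltac:(move: heavy_t; rewrite /heavy; lia).
exists (t |: Z'); split.
  by rewrite cardsU1; move: heavy_t; rewrite /heavy; case: (t \notin Z') => /=; nia.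
move=> x; rewrite in_setU1 negb_or => /andP [xt xZ'].
case: (boolP (ancb t x)) => /ancP tx.
  (* x lies below t, inside the subtree of a child c of t that is not heavy *)
  pose c := ctop [set t] x.
  have [tc dtc] := @ctop_below [set t] t x (set11 t) tx ltac:(by rewrite inE).
  have cr : c != r by rewrite -depth0 /c; lia.
  have pc : p c = t by have := ctop_stop [set t] x; rewrite (negbTE cr) inE => /eqP.
  have light_c : ~~ heavy c.
    by apply/negP => /deepest; rewrite (d_parent cr) pc; lia.
  apply: leq_trans (_ : #|[set y in A | ancb c y]| <= m); last by rewrite leqNgt.
  apply/subset_leq_card/subsetP => y; rewrite !inE => /andP [-> /andP [_ /eqP cy]].
  apply/ancP; apply: anc_trans (ctop_anc (t |: Z') y).
  rewrite cy /c (@ctop_sub [set t] (t |: Z') x) ?sub1set ?setU11 //.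
  exact: ctop_anc.
(* otherwise x is outside the subtree of t, where Z and Z' agree *)
have Ex : ctop (t |: Z') x = ctop Z' x by apply: ctop_notanc.
apply: leq_trans (smallZ' x xZ'); apply/subset_leq_card/subsetP => y.
rewrite !inE negb_or => /andP [yA /andP [/andP [yt yZ] /eqP cy]].
have ty : ~ anc t y.
  move=> ty; have [] := @ctop_below (t |: Z') t y (setU11 _ _) ty.
    by rewrite in_setU1 negb_or yt.
  by rewrite cy => /anc_trans/(_ (ctop_anc _ x)).
by rewrite yA yZ -(ctop_notanc _ ty) cy Ex eqxx /= andbT; apply/negP => /ancP.
Qed.

(* In the application,
   h x y holds when an edge of G joins the bags of x and y; then crossers z
   consists of bags of end points of the edges counted in cross(z), so that
   #|crossers z| <= 2 cross(z). *)
Section CrossingGraph.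
Variables (h : rel N) (K : nat).
Hypothesis hsym : symmetric h.

Definition crossers (z : N) : {set N} :=
  [set x | (x != z) &&
     [exists y, [&& y != z, h x y & ctop [set z] x != ctop [set z] y]]].

Hypothesis crossers_small : forall z, #|crossers z| <= K.

Lemma card_crossers (Z : {set N}) : #|\bigcup_(z in Z) crossers z| <= #|Z| * K.
Proof. exact: card_bigcup_leK. Qed.

Lemma separated_crosser (Z : {set N}) x y : x \notin Z -> y \notin Z -> h x y ->
  ctop Z x != ctop Z y -> x \in \bigcup_(z in Z) crossers z.
Proof.
move=> xZ yZ hxy; apply: contraR => xJ; apply/eqP/ctop_separate => // z zZ.
apply/eqP; apply: contraR xJ => ne; apply/bigcupP; exists z => //.
rewrite inE; apply/andP; split; first by apply: contraNneq xZ => ->.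
by apply/existsP; exists y; rewrite hxy ne !andbT; apply: contraNneq yZ => ->.
Qed.

Lemma neighbour_of_set (S : {set N}) x y : x \in S -> y \notin S -> h x y ->
  [\/ y = p x, y = ctop S y, y \in crossers (p x)
    | exists2 w, w \in ctop S y |: S & y \in crossers w].
Proof.
move=> xS yS hxy; have hyx : h y x by rewrite hsym.
have xy : x != y by apply: contraNneq yS => <-.
case: (eqVneq y (p x)) => [|ypx]; first by constructor 1.
case: (boolP ((y != r) && (x == p y))) => [/andP [yr /eqP xpy]|not_child].
  by constructor 2; rewrite ctop_self // -xpy.
case: (boolP (ancb x y)) => /ancP xy_anc; last first.
  (* x does not lie above y: p x separates them *)
  have xr : x != r by apply: contra_notN xy_anc => /eqP ->; exact: anc_root.
  constructor 3; rewrite inE ypx; apply/existsP; exists x.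
  rewrite eq_sym parent_neq // hyx (ctop_self xr) ?inE //=.
  by apply: contra_not_neq xy_anc => <-; exact: ctop_anc.
(* x lies strictly above y; let b be the top of y's component of T - S *)
have [xb dxb] := ctop_below xS xy_anc yS.
set b := ctop S y in xb dxb *.
have br : b != r by rewrite -depth0 -lt0n (leq_ltn_trans (leq0n _) dxb).
have pbS : p b \in S by have := ctop_stop S y; rewrite (negbTE br).
have dx_b z : d (ctop [set z] x) < d b.
  exact: leq_ltn_trans (anc_depth (ctop_anc _ x)) dxb.
case: (eqVneq (p b) x) => [pbx|pbx].
  (* b is a child of x, and b separates y from x *)
  have yb : y != b by apply: contraNneq not_child => ->; rewrite br pbx eqxx.
  have xb' : x != b by apply: contraTneq dxb => ->; rewrite ltnn.
  constructor 4; exists b; first exact: setU11.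
  rewrite inE yb; apply/existsP; exists x; rewrite xb' hyx /=.
  have [_ dby] := @ctop_below [set b] b y (set11 b) (ctop_anc S y) ltac:(by rewrite inE).
  by apply: contraTneq (dx_b b) => <-; rewrite -leqNgt ltnW.
(* otherwise the parent of b separates y from x *)
have ypb : y != p b by apply: contraNneq yS => ->.
constructor 4; exists (p b); first by rewrite setU1r.
rewrite inE ypb; apply/existsP; exists x; rewrite eq_sym pbx hyx /=.
rewrite (@ctop_sub [set p b] S y) ?sub1set // -/b (ctop_self br) ?inE //.
by apply: contraTneq (dx_b (p b)) => <-; rewrite ltnn.
Qed.

Definition nbr_bound (s : nat) : nat := s + (1 + s * K) + (s + s + (1 + s * K)) * K.

Lemma card_neighbours (S C : {set N}) : [disjoint C & S] ->
  (forall x y, x \in C -> y \in C ->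
     connect [rel u v | [&& h u v, u \in C & v \in C]] x y) ->
  #|[set y in C | [exists x in S, h x y]]| <= nbr_bound #|S|.
Proof.
move=> dCS Cconn; set P := p @: S; set Tops := ctop S @: C.
have CS y : y \in C -> y \notin S by move=> yC; rewrite (disjointFr dCS yC).
have card_Tops : #|Tops| <= 1 + #|S| * K.
  apply: leq_trans (card_imset_connected (ctop S) Cconn) _; rewrite leq_add2l.
  apply: leq_trans (card_crossers S); apply/subset_leq_card/subsetP => x.
  rewrite inE => /andP [xC /existsP [y /and3P [yC hyx ne]]].
  by apply: (separated_crosser (y := y)); rewrite ?CS 1?hsym 1?eq_sym.
have cover : [set y in C | [exists x in S, h x y]] \subset
             (P :|: Tops) :|: \bigcup_(w in (S :|: P) :|: Tops) crossers w.
  apply/subsetP => y; rewrite inE => /andP [yC /existsP [x /andP [xS hxy]]].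
  have ty : ctop S y \in Tops by exact: imset_f.
  have px : p x \in P by exact: imset_f.
  rewrite !in_setU; case: (neighbour_of_set xS (CS _ yC) hxy).
  - by move=> ->; rewrite px.
  - by move=> ->; rewrite ty orbT.
  - by move=> yJ; apply/orP; right; apply/bigcupP; exists (p x) => //; rewrite !in_setU px orbT.
  move=> [w wS yJ]; apply/orP; right; apply/bigcupP; exists w => //.
  by move: wS; rewrite !in_setU in_set1 => /orP [/eqP ->|->]; rewrite ?ty ?orbT.
apply: leq_trans (subset_leq_card cover) _.
have card_P : #|P| <= #|S| by exact: leq_imset_card.
rewrite /nbr_bound; apply: leq_trans (leq_card_setU _ _).1 _.
apply: leq_add; first by apply: leq_trans (leq_card_setU _ _).1 _; exact: leq_add.
apply: leq_trans (card_crossers _) _; rewrite leq_mul2r; apply/orP; right.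
apply: leq_trans (leq_card_setU _ _).1 _; apply: leq_add => //.
by apply: leq_trans (leq_card_setU _ _).1 _; exact: leq_add.
Qed.

(* Numerical constants of the construction: parts of the partition have at
   most bag_cap nodes, and at most root_cap nodes are prescribed to lie in
   the root part of a recursive call. *)
Definition alpha : nat := (K + 2) * (K + 2).
Definition sep_size : nat := (2 * alpha * (K + 1)).-1.
Definition root_cap : nat := 4 * alpha * alpha * (K + 1).
Definition bag_cap : nat := 2 * root_cap.

Lemma sep_sizeS : sep_size.+1 = 2 * alpha * (K + 1).
Proof. by rewrite /sep_size /alpha; lia. Qed.

Lemma nbr_bound_le s : nbr_bound s <= alpha * s.+1.
Proof. by rewrite /nbr_bound /alpha; nia. Qed.

(* If a separator Z fits in the budget, the nodes around one component of
   T - Z, counted by s, give a neighbourhood bound within root_cap. *)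
Lemma attach_budget z s : z * sep_size.+1 <= root_cap ->
  s <= z * (K + 1) + sep_size -> alpha * s.+1 <= root_cap.
Proof.
rewrite sep_sizeS /root_cap => zq.
have q_pos : 0 < 2 * alpha * (K + 1) by rewrite !muln_gt0 /alpha addn1 addn2.
have z2a : z <= 2 * alpha.
  rewrite -(leq_pmul2r q_pos); apply: leq_trans zq _; rewrite leq_eqVlt; apply/orP; left.
  by apply/eqP; lia.
move=> sz; have s1 : s.+1 <= z * (K + 1) + 2 * alpha * (K + 1).
  by have := sep_sizeS; lia.
apply: leq_trans (leq_mul (leqnn alpha) s1) _.
have : alpha * (z * (K + 1)) <= alpha * (2 * alpha * (K + 1)).
  by rewrite leq_mul2l leq_mul2r z2a !orbT.
lia.
Qed.

(* A partition of a set of tree nodes into parts, each part represented by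
   one of its nodes, together with a tree structure on the parts. *)
Record pdata := PData { rep : N -> N; up : N -> N; rank : N -> nat; root : N }.

(* D is a tree-partition of the h-graph induced on W, with the prescribed
   nodes R in the root part: rep is a retraction of W onto the
   representatives, up gives every non-root part its parent part (rank
   decreases towards the root), every h-edge stays in a part or joins a
   part to its parent, and parts have at most bag_cap nodes. *)
Record rooted_partition (W R : {set N}) (D : pdata) : Prop := {
  rep_idem : forall x, x \in W -> rep D x \in W /\ rep D (rep D x) = rep D x;
  root_rep : W != set0 -> root D \in W /\ rep D (root D) = root D;
  rep_prescribed : forall x, x \in R -> rep D x = root D;
  up_rep : forall y, y \in W -> rep D y = y -> y != root D ->
    [/\ up D y \in W, rep D (up D y) = up D y & rank D (up D y) < rank D y];
  edge_rep : forall x y, x \in W -> y \in W -> h x y ->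
    [\/ rep D x = rep D y, rep D x != root D /\ up D (rep D x) = rep D y
      | rep D y != root D /\ up D (rep D y) = rep D x];
  part_small : forall v, #|[set x in W | rep D x == v]| <= bag_cap }.

Lemma rooted_partition0 (R : {set N}) : R \subset set0 ->
  rooted_partition set0 R (PData id id (fun _ => 0) r).
Proof.
move=> R0; split => /= [x||x /(subsetP R0)|y|x y|v]; rewrite ?inE ?eqxx //.
rewrite (_ : [set x in set0 | _] = set0) ?cards0 //.
by apply/setP => x; rewrite !inE.
Qed.

Definition attach (bag C : {set N}) : {set N} := [set y in C | [exists b in bag, h b y]].

(* Gluing: given a root part bag and a rooted partition of each component C
   of W - bag in which the nodes of C adjacent to bag lie in the root part,
   hang the partitions of the components below bag. *)
Section Glue.
Variables (W R bag : {set N}) (rho : N) (G : {set N} -> pdata).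
Let U := W :\: bag.
Let C y := component h U y.
Let D y := G (C y).
Hypothesis R_bag : R \subset bag.
Hypothesis bag_W : bag \subset W.
Hypothesis rho_bag : rho \in bag.
Hypothesis bag_small : #|bag| <= bag_cap.
Hypothesis G_part : forall y, y \in U -> rooted_partition (C y) (attach bag (C y)) (D y).

Definition glue_rep (y : N) : N := if y \in U then rep (D y) y else rho.
Definition glue_up (y : N) : N :=
  if y \in U then (if y == root (D y) then rho else up (D y) y) else rho.
Definition glue_rank (y : N) : nat := if y \in U then (rank (D y) y).+1 else 0.
Definition glued : pdata := PData glue_rep glue_up glue_rank rho.

Lemma glue_UW : U \subset W.
Proof. exact: subsetDl. Qed.

Lemma glue_UE y : (y \in U) = (y \notin bag) && (y \in W).
Proof. exact: in_setD. Qed.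

Lemma glue_rho : rho \notin U.
Proof. by rewrite glue_UE rho_bag. Qed.

Lemma glue_CU y y' : y' \in C y -> y' \in U.
Proof. exact: (subsetP (componentU _ _ _)). Qed.

Lemma glue_D y y' : y' \in C y -> D y' = D y.
Proof. by move=> y'C; rewrite /D /C (component_eq hsym y'C). Qed.

Lemma glue_rep_in y : y \in U -> rep (D y) y \in C y.
Proof. by move=> yU; have [] := rep_idem (G_part yU) (component_self h yU). Qed.

Lemma glue_root_in y : y \in U -> root (D y) \in C y.
Proof.
move=> yU; have [] // := root_rep (G_part yU).
by apply/set0Pn; exists y; exact: component_self.
Qed.

Lemma glue_repU y : y \in U -> glue_rep y = rep (D y) y.
Proof. by rewrite /glue_rep => ->. Qed.

Lemma glue_rep_out y : y \notin U -> glue_rep y = rho.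
Proof. by rewrite /glue_rep => /negbTE ->. Qed.

Lemma glue_rep_idem x : x \in W -> glue_rep x \in W /\ glue_rep (glue_rep x) = glue_rep x.
Proof.
move=> xW; case: (boolP (x \in U)) => xU; last by rewrite !glue_rep_out ?glue_rho ?(subsetP bag_W).
have repC := glue_rep_in xU; have repU := glue_CU repC.
rewrite !glue_repU // (glue_D repC); split; first exact: (subsetP glue_UW).
by have [] := rep_idem (G_part xU) (component_self h xU).
Qed.

Lemma glue_up_rep y : y \in W -> glue_rep y = y -> y != rho ->
  [/\ glue_up y \in W, glue_rep (glue_up y) = glue_up y & glue_rank (glue_up y) < glue_rank y].
Proof.
move=> yW yrep yrho; case: (boolP (y \in U)) => yU; last first.
  by move: yrep yrho; rewrite glue_rep_out // => ->; rewrite eqxx.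
rewrite /glue_up /glue_rank yU; case: (eqVneq y (root (D y))) => [_|yroot].
  by rewrite glue_rep_out ?glue_rho // (negbTE glue_rho) (subsetP bag_W).
have [upC up_rep rk_up] := up_rep (G_part yU) (component_self h yU) ltac:(by rewrite -glue_repU) yroot.
have upU := glue_CU upC.
by rewrite upU (subsetP glue_UW) // glue_repU // !(glue_D upC).
Qed.

Lemma glue_U_rho z : z \in U -> z != rho.
Proof. by apply: contraTneq => ->; exact: glue_rho. Qed.

Lemma glue_up_in x z : z \in C x -> z != root (D x) -> glue_up z = up (D x) z.
Proof.
move=> zC zroot; rewrite /glue_up (glue_CU zC) (glue_D zC).
by rewrite (negbTE zroot).
Qed.

(* An edge leaving a component C of W - bag ends in bag, so its end in C is
   in the root part of C, whose parent is rho. *)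
Lemma glue_attach x y : x \in U -> y \in W -> y \notin U -> h x y ->
  glue_rep x != rho /\ glue_up (glue_rep x) = glue_rep y.
Proof.
move=> xU yW yU hxy.
have xA : x \in attach bag (C x).
  rewrite inE component_self //=; apply/existsP; exists y; rewrite hsym hxy andbT.
  by move: yU; rewrite glue_UE yW andbT negbK.
have rootC := glue_root_in xU; have rootU := glue_CU rootC.
rewrite glue_repU // (rep_prescribed (G_part xU) xA) (glue_rep_out yU).
split; first exact: glue_U_rho.
by rewrite /glue_up rootU (glue_D rootC) eqxx.
Qed.

Lemma glue_edge x y : x \in W -> y \in W -> h x y ->
  [\/ glue_rep x = glue_rep y,
      glue_rep x != rho /\ glue_up (glue_rep x) = glue_rep y
    | glue_rep y != rho /\ glue_up (glue_rep y) = glue_rep x].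
Proof.
move=> xW yW hxy; case: (boolP (x \in U)) => xU; case: (boolP (y \in U)) => yU.
- have yC : y \in C x by exact: component_edge.
  have repx : rep (D x) x \in C x by exact: glue_rep_in.
  have repy : rep (D x) y \in C x.
    by rewrite -(glue_D yC) /C -(component_eq hsym yC); exact: glue_rep_in.
  rewrite !glue_repU // (glue_D yC).
  case: (edge_rep (G_part xU) (component_self h xU) yC hxy) => [->|[ne <-]|[ne <-]].
  + by constructor 1.
  + by constructor 2; rewrite (glue_up_in repx ne) glue_U_rho // (glue_CU repx).
  + by constructor 3; rewrite (glue_up_in repy ne) glue_U_rho // (glue_CU repy).
- by constructor 2; exact: glue_attach.
- by constructor 3; rewrite hsym in hxy; exact: glue_attach.
- by constructor 1; rewrite !glue_rep_out.
Qed.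

Lemma glue_part_small v : #|[set x in W | glue_rep x == v]| <= bag_cap.
Proof.
case: (eqVneq v rho) => [->|vrho].
  (* the root part is bag itself *)
  apply: leq_trans bag_small; apply/subset_leq_card/subsetP => x.
  rewrite inE => /andP [xW /eqP xrep]; apply: contraT => xbag.
  have xU : x \in U by rewrite glue_UE xbag.
  by move: glue_rho; rewrite -xrep glue_repU // (glue_CU (glue_rep_in xU)).
case: (set_0Vmem [set x in W | glue_rep x == v]) => [->|[x0]]; first by rewrite cards0.
rewrite inE => /andP [x0W /eqP x0rep].
have inU x : glue_rep x = v -> x \in U.
  by move=> xrep; apply: contraT => /glue_rep_out xout; move: vrho; rewrite -xrep xout eqxx.
(* a non-root part lies inside a single component, here C x0 *)
have x0U := inU _ x0rep.
apply: leq_trans (part_small (G_part x0U) v); apply/subset_leq_card/subsetP => x.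
rewrite inE => /andP [xW /eqP xrep]; have xU := inU _ xrep.
have vx : v \in C x by rewrite -xrep glue_repU //; exact: glue_rep_in.
have vx0 : v \in C x0 by rewrite -x0rep glue_repU //; exact: glue_rep_in.
have xC : x \in C x0 by rewrite /C -(component_eq hsym vx0) (component_eq hsym vx) component_self.
by rewrite in_set xC -(glue_D xC) -glue_repU // xrep eqxx.
Qed.

Lemma glued_partition : rooted_partition W R glued.
Proof.
split => //=.
- exact: glue_rep_idem.
- by move=> _; rewrite glue_rep_out ?glue_rho ?(subsetP bag_W).
- by move=> x /(subsetP R_bag) xbag; rewrite glue_rep_out // glue_UE xbag.
- exact: glue_up_rep.
- exact: glue_edge.
- exact: glue_part_small.
Qed.

End Glue.

(* Z together with its crossers: the nodes whose removal confines every
   component of W - thicken Z to a single component of T - Z. *)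
Definition thicken (Z : {set N}) : {set N} := Z :|: \bigcup_(z in Z) crossers z.

Lemma card_thicken (Z : {set N}) : #|thicken Z| <= #|Z| * (K + 1).
Proof.
rewrite mulnDr muln1 addnC; apply: leq_trans (leq_card_setU _ _).1 _.
by rewrite leq_add2l card_crossers.
Qed.

Lemma ctop_const_on (Z C : {set N}) x y : [disjoint C & thicken Z] ->
  (forall x y, x \in C -> y \in C ->
     connect [rel u v | [&& h u v, u \in C & v \in C]] x y) ->
  x \in C -> y \in C -> ctop Z y = ctop Z x.
Proof.
move=> dCZ Cconn xC yC; have outZ u : u \in C -> u \notin Z.
  by move=> uC; apply: contraFN (disjointFr dCZ uC); rewrite in_setU => ->.
symmetry; apply: (connect_const _ (Cconn _ _ xC yC)) => u v /and3P [huv uC vC].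
apply/eqP; apply: contraT => ne; move: (disjointFr dCZ uC); rewrite in_setU.
by rewrite (separated_crosser (outZ _ uC) (outZ _ vC) huv ne) orbT.
Qed.

Lemma attach_small (R Z C : {set N}) :
  #|Z| * sep_size.+1 <= root_cap ->
  (forall x, x \notin Z ->
     #|[set y in R | (y \notin Z) && (ctop Z y == ctop Z x)]| <= sep_size) ->
  [disjoint C & R :|: thicken Z] ->
  (forall x y, x \in C -> y \in C ->
     connect [rel u v | [&& h u v, u \in C & v \in C]] x y) ->
  #|attach (R :|: thicken Z) C| <= root_cap.
Proof.
move=> Zsmall Rsep dC Cconn; case: (set_0Vmem C) => [->|[x xC]].
  by rewrite (_ : attach _ _ = set0) ?cards0 //; apply/setP => y; rewrite !inE.
have dCZ : [disjoint C & thicken Z] by exact: disjointWr (subsetUr _ _) dC.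
have CR y : y \in C -> y \notin R :|: thicken Z by move=> yC; rewrite (disjointFr dC yC).
have xZ : x \notin Z by apply: contra (CR _ xC); rewrite !in_setU => ->; rewrite orbT.
(* the nodes of R next to C lie in the component of T - Z containing C *)
pose S := thicken Z :|: [set y in R | (y \notin Z) && (ctop Z y == ctop Z x)].
have cover : attach (R :|: thicken Z) C \subset [set y in C | [exists s in S, h s y]].
  apply/subsetP => y; rewrite !inE => /andP [yC /existsP [b /andP [bRZ hby]]].
  rewrite yC; apply/existsP; exists b; rewrite hby andbT in_setU.
  case: (boolP (b \in thicken Z)) => //= bZ; move: bRZ; rewrite in_setU (negbTE bZ) orbF => bR.
  have b_Z : b \notin Z by apply: contra bZ; rewrite in_setU => ->.
  rewrite inE bR b_Z -(ctop_const_on dCZ Cconn xC yC) /=; apply: contraT => ne.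
  have y_Z : y \notin Z by apply: contra (CR _ yC); rewrite !in_setU => ->; rewrite !orbT.
  by move: bZ; rewrite in_setU (separated_crosser b_Z y_Z hby ne) orbT.
have dCS : [disjoint C & S].
  rewrite disjoints_subset; apply/subsetP => y yC; move: (CR _ yC).
  rewrite in_setU negb_or => /andP [yR yZ].
  by rewrite in_setC in_setU inE (negbTE yR) (negbTE yZ).
have card_S : #|S| <= #|Z| * (K + 1) + sep_size.
  by apply: leq_trans (leq_card_setU _ _).1 _; rewrite leq_add ?card_thicken ?Rsep.
apply: leq_trans (subset_leq_card cover) _.
apply: leq_trans (card_neighbours dCS Cconn) _.
exact: leq_trans (nbr_bound_le _) (attach_budget Zsmall card_S).
Qed.

Lemma attach_mono (B B' C : {set N}) : B \subset B' -> attach B C \subset attach B' C.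
Proof.
move=> BB'; apply/subsetP => u; rewrite !inE => /andP [-> /existsP [b /andP [bB hbu]]].
by apply/existsP; exists b; rewrite (subsetP BB') // hbu.
Qed.

(* The root part of one step of the construction: R together with the
   nodes of W in thicken Z, for a separator Z of R. *)
Lemma separating_bag (W R : {set N}) : R \subset W -> #|R| <= root_cap ->
  exists bag : {set N}, [/\ R \subset bag, bag \subset W, #|bag| <= bag_cap &
    forall y, y \in W :\: bag ->
      #|attach bag (component h (W :\: bag) y)| <= root_cap].
Proof.
move=> RW Rcap; have [Z [card_Z Rsep]] := separator R sep_size.
have Zsmall : #|Z| * sep_size.+1 <= root_cap by exact: leq_trans card_Z Rcap.
set bag := R :|: (thicken Z :&: W).
have bag_sub : bag \subset R :|: thicken Z by apply: setUS; exact: subsetIl.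
exists bag; split.
- exact: subsetUl.
- by rewrite subUset RW subsetIr.
- apply: leq_trans (leq_card_setU _ _).1 _; rewrite /bag_cap mul2n -addnn leq_add //.
  apply: leq_trans (subset_leq_card (subsetIl _ _)) _.
  apply: leq_trans (card_thicken Z) (leq_trans _ Zsmall).
  by rewrite leq_mul2l sep_sizeS leq_pmull ?orbT // muln_gt0 /alpha addn2.
move=> y yU; set C := component h _ y.
apply: leq_trans (subset_leq_card (attach_mono _ bag_sub)) _.
apply: attach_small Zsmall Rsep _ (component_connected hsym (x := y)).
rewrite disjoints_subset; apply/subsetP => u /(subsetP (componentU _ _ _)).
rewrite !in_setD in_setU in_setI negb_or => /andP [/andP [uR u_thick] uW].
by rewrite in_setC in_setU (negbTE uR); move: u_thick; rewrite uW andbT.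
Qed.

Lemma rooted_partition_sub (W R R' : {set N}) (D : pdata) :
  R \subset R' -> rooted_partition W R' D -> rooted_partition W R D.
Proof. by move=> RR' [? ? pres ? ? ?]; split => // x /(subsetP RR'); exact: pres. Qed.

(* Every set W of nodes has a rooted partition with at most root_cap
   prescribed root nodes: cut off a root part with separating_bag and
   recurse on the components of the rest. *)
Lemma rooted_partition_exists (W R : {set N}) : R \subset W -> #|R| <= root_cap ->
  exists D, rooted_partition W R D.
Proof.
have [n] := ubnP #|W|; elim: n W R => // n IH W R Wn RW Rcap.
case: (set_0Vmem W) => [W0|[w0 w0W]].
  by subst W; exists (PData id id (fun _ => 0) r); exact: rooted_partition0.
(* make the prescribed set nonempty, so that the root part is nonempty *)
have [R' [RR' R'W R'cap [rho rhoR']]] : exists R' : {set N},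
    [/\ R \subset R', R' \subset W, #|R'| <= root_cap & exists rho, rho \in R'].
  case: (set_0Vmem R) => [R0|[rho rhoR]]; last by exists R; split => //; exists rho.
  exists [set w0]; rewrite R0 sub0set sub1set w0W cards1; split => //.
    by rewrite /root_cap /alpha; nia.
  by exists w0; rewrite set11.
have [bag [R'bag bagW bag_small attach_small]] := separating_bag R'W R'cap.
set U := W :\: bag.
have rho_bag : rho \in bag by exact: (subsetP R'bag).
have part_comp C : exists D, (exists2 y, y \in U & C = component h U y) ->
    rooted_partition C (attach bag C) D.
  case: (boolP [exists y in U, C == component h U y]) => [/existsP [y /andP [yU /eqP ->]]|none].
    have [|||D HD] := IH (component h U y) (attach bag (component h U y)); last by exists D.
    - rewrite -ltnS (leq_trans _ Wn) // ltnS; apply/proper_card/properP; split.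
        exact: subset_trans (componentU _ _ _) (subsetDl _ _).
      exists rho; first exact: (subsetP bagW).
      by apply: contraL rho_bag => /(subsetP (componentU _ _ _)); rewrite in_setD => /andP [].
    - by apply/subsetP => u; rewrite inE => /andP [].
    - exact: attach_small.
  exists (PData id id (fun _ => 0) r) => -[y yU CE]; case/negP: none.
  by apply/existsP; exists y; rewrite yU CE eqxx.
have [G HG] := boolp.choice part_comp.
exists (glued W bag rho G); apply: rooted_partition_sub RR' _.
apply: glued_partition => // y yU; apply: HG; exists y => //.
Qed.

End CrossingGraph.

End RootedTree.

Definition prel (n : nat) (rho : 'I_n) (q : 'I_n -> 'I_n) : rel 'I_n :=
  fun x y => ((x != rho) && (q x == y)) || ((y != rho) && (q y == x)).

(* If a rank strictly decreases along q, the n - 1 parent edges are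
   distinct and none is the reverse of another. *)
Lemma card_prel (n : nat) (rho : 'I_n) (q : 'I_n -> 'I_n) (rk : 'I_n -> nat) :
  (forall y, y != rho -> rk (q y) < rk y) ->
  #|[set pr : 'I_n * 'I_n | prel rho q pr.1 pr.2]| = 2 * (n - 1).
Proof.
move=> rk_q.
pose Up := [set (x, q x) | x in [set~ rho]].
pose Down := [set (q x, x) | x in [set~ rho]].
have -> : [set pr : 'I_n * 'I_n | prel rho q pr.1 pr.2] = Up :|: Down.
  apply/setP => -[x y]; rewrite !inE /prel /=; apply/orP/orP.
    case=> /andP [ne /eqP <-]; [left|right]; apply/imsetP; [exists x | exists y];
    by rewrite ?inE.
  by case=> /imsetP [z zr [-> ->]]; [left|right]; move: zr; rewrite !inE eqxx andbT.
have card_half (f : 'I_n -> 'I_n * 'I_n) : injective f -> #|f @: [set~ rho]| = n - 1.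
  by move=> f_inj; rewrite card_imset // cardsC1 card_ord subn1.
have disj : Up :&: Down = set0.
  apply/setP => -[x y]; rewrite !inE; apply/negP.
  case/andP => /imsetP [u ur [-> ->]] /imsetP [v vr [E1 E2]].
  move: ur vr; rewrite !inE => /rk_q ru /rk_q rv.
  by move: ru rv; rewrite -E1 E2 => ru rv; have := ltn_trans ru rv; rewrite ltnn.
rewrite cardsU disj cards0 subn0 !card_half ?addnn ?mul2n //.
  by move=> u v [].
by move=> u v [].
Qed.

Lemma prel_tree (n : nat) (rho : 'I_n) (q : 'I_n -> 'I_n) (rk : 'I_n -> nat) :
  (forall y, y != rho -> rk (q y) < rk y) -> is_tree (prel rho q).
Proof.
move=> rk_q; have prel_sym : symmetric (prel rho q) by move=> x y; rewrite /prel orbC.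
have to_root x : connect (prel rho q) x rho.
  have [m] := ubnP (rk x); elim: m x => // m IH x xm.
  case: (eqVneq x rho) => [->|xr]; first exact: connect0.
  apply: connect_trans (connect1 _) (IH (q x) _); first by rewrite /prel xr eqxx.
  by have := rk_q x xr; lia.
split => //.
- exact: leq_ltn_trans (leq0n _) (ltn_ord rho).
- move=> x; apply/negP; rewrite /prel orbb => /andP [xr /eqP qx].
  by have := rk_q x xr; rewrite qx ltnn.
- by move=> s t; apply: connect_trans (to_root s) _; rewrite (sym_connect_sym prel_sym).
- exact: card_prel rk_q.
Qed.

(* Every tree can be rooted: breadth-first search from node 0 gives a
   parent map p and a depth d with an edge from p x to x for x <> r. *)
Lemma tree_bfs (n : nat) (a : rel 'I_n) : is_tree a ->
  exists (r : 'I_n) (p : 'I_n -> 'I_n) (d : 'I_n -> nat),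
    [/\ p r = r, d r = 0, forall x, x != r -> d x = (d (p x)).+1
      & forall x, x != r -> a (p x) x].
Proof.
case=> n_pos _ _ conn _; pose r := Ordinal n_pos.
pose reach x m := [exists t : m.-tuple 'I_n, path a r t && (last r t == x)].
have reachP x s : path a r s -> last r s = x -> reach x (size s).
  by move=> ps ls; apply/existsP; exists (in_tuple s); rewrite ps ls eqxx.
have ex_reach x : exists m, reach x m.
  by have /connectP [s ps ls] := conn r x; exists (size s); apply: reachP.
pose d x := ex_minn (ex_reach x).
have d_path x : exists s, [/\ path a r s, last r s = x & size s = d x].
  rewrite /d; case: ex_minnP => m /existsP [t /andP [pt /eqP lt]] _.
  by exists t; rewrite size_tuple.
have d_min x s : path a r s -> last r s = x -> d x <= size s.
  by move=> ps ls; rewrite /d; case: ex_minnP => m _; apply; exact: reachP.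
have d_root : d r = 0 by apply/eqP; rewrite -leqn0; apply: (d_min r [::]).
have d_edge x y : a x y -> d y <= (d x).+1.
  move=> axy; have [s [ps ls ds]] := d_path x.
  have := d_min y (rcons s y); rewrite rcons_path ps ls axy last_rcons size_rcons ds.
  exact.
have parent_ex x : x != r -> exists y, a y x && ((d y).+1 == d x).
  move=> xr; have [s [ps ls ds]] := d_path x.
  case/lastP: s ps ls ds => [_ /= xE|s z]; first by move: xr; rewrite -xE eqxx.
  rewrite rcons_path last_rcons size_rcons => /andP [ps ayz] zx ds.
  exists (last r s); rewrite -zx ayz /=.
  have := d_min _ s ps erefl; have := d_edge _ _ ayz; rewrite zx.
  by move=> le1 le2; rewrite eqn_leq le1 andbT -ds ltnS.
pose p x := if [pick y | a y x && ((d y).+1 == d x)] is Some y then y else r.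
have p_spec x : x != r -> a (p x) x /\ (d (p x)).+1 = d x.
  move=> xr; rewrite /p; case: pickP => [y /andP [ayx /eqP]//|none].
  by have [y] := parent_ex x xr; rewrite none.
exists r, p, d; split => // [|x /p_spec []|x /p_spec []] //.
by rewrite /p; case: pickP => [y /andP [_ /eqP]|//]; rewrite d_root.
Qed.

(* A rooted tree is the tree of its parent map: the parent edges are among
   the edges of a and are as many as them. *)
Lemma tree_rooted (n : nat) (a : rel 'I_n) : is_tree a ->
  exists (r : 'I_n) (p : 'I_n -> 'I_n) (d : 'I_n -> nat),
    [/\ p r = r, d r = 0, forall x, x != r -> d x = (d (p x)).+1
      & a =2 prel r p].
Proof.
move=> tree_a; have [r [p [d [p_root d_root d_parent a_parent]]]] := tree_bfs tree_a.
case: tree_a => _ a_sym _ _ card_a.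
exists r, p, d; split => // x y.
have d_p z : z != r -> d (p z) < d z by move=> /d_parent ->.
have sub : [set pr : 'I_n * 'I_n | prel r p pr.1 pr.2] \subset
           [set pr : 'I_n * 'I_n | a pr.1 pr.2].
  apply/subsetP => -[u v]; rewrite !inE /prel /=.
  by case/orP => /andP [ur /eqP <-]; [rewrite a_sym|]; exact: a_parent.
have card_eq : #|[set pr : 'I_n * 'I_n | prel r p pr.1 pr.2]| =
               #|[set pr : 'I_n * 'I_n | a pr.1 pr.2]|.
  by rewrite card_a (card_prel d_p).
by have := subset_cardP card_eq sub => /(_ (x, y)); rewrite !inE.
Qed.

Section Decomposition.
Variables (V : finType) (e : rel V) (n : nat) (X : 'I_n -> {set V}) (t0 : 'I_n).
Hypothesis e_sym : symmetric e.
Hypothesis X_disj : forall s t, s != t -> [disjoint X s & X t].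
Hypothesis X_cover : forall v, exists t, v \in X t.

Definition bag_of (v : V) : 'I_n := odflt t0 [pick t | v \in X t].

Lemma bag_ofP v : v \in X (bag_of v).
Proof.
rewrite /bag_of; case: pickP => [t //|none].
by have [t vt] := X_cover v; move: (none t); rewrite vt.
Qed.

Lemma bag_of_eq v t : v \in X t -> bag_of v = t.
Proof.
move=> vt; apply/eqP; apply: contraT => ne.
by move: (disjointFr (X_disj ne) (bag_ofP v)); rewrite vt.
Qed.

Definition bag_rel : rel 'I_n :=
  fun x y => (x != y) && [exists u, exists v, [&& e u v, u \in X x & v \in X y]].

Lemma bag_rel_sym : symmetric bag_rel.
Proof.
move=> x y; rewrite /bag_rel eq_sym; congr (_ && _).
by apply/existsP/existsP => -[u /existsP [v /and3P [euv ux vy]]];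
  exists v; apply/existsP; exists u; rewrite e_sym euv ux vy.
Qed.

Lemma card_crossers_cross (a : rel 'I_n) (r : 'I_n) (p : 'I_n -> 'I_n) (d : 'I_n -> nat) z :
  d r = 0 -> (forall x, x != r -> d x = (d (p x)).+1) -> a =2 prel r p ->
  #|crossers p d bag_rel z| <= 2 * cross e a X z.
Proof.
move=> d_root d_parent a_prel.
pose ends := [set u | [exists v, e u v && crosses a X z u v]].
pose crossing := [set S : {set V} | [exists u : V, exists v : V,
        [&& e u v, S == [set u; v] & crosses a X z u v]]].
apply: leq_trans (_ : #|bag_of @: ends| <= _).
  apply/subset_leq_card/subsetP => x.
  rewrite inE => /andP [xz /existsP [y /and3P [yz hxy sep]]].
  move: hxy; rewrite /bag_rel => /andP [_ /existsP [u /existsP [v /and3P [euv ux vy]]]].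
  apply/imsetP; exists u; last by rewrite (bag_of_eq ux).
  rewrite inE; apply/existsP; exists v; rewrite euv /=.
  apply/existsP; exists x; apply/existsP; exists y; rewrite ux vy xz yz /=.
  (* a path in T - z from x to y would keep them in one component *)
  apply: contra sep => xy_conn; apply/eqP.
  apply: (connect_const (e := del_rel a z)) xy_conn => u' v' /and3P [auv u'z v'z].
  by apply: (ctop_tree_edge d_root d_parent u'z v'z); move: auv; rewrite a_prel.
apply: leq_trans (leq_imset_card _ _) _.
apply: leq_trans (_ : #|\bigcup_(S in crossing) S| <= _).
  apply/subset_leq_card/subsetP => u; rewrite inE => /existsP [v /andP [euv uv_cross]].
  apply/bigcupP; exists [set u; v]; last by rewrite !inE eqxx.
  by rewrite inE; apply/existsP; exists u; apply/existsP; exists v; rewrite euv eqxx.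
apply: leq_trans (card_bigcup_le _ _) _.
apply: leq_trans (_ : \sum_(S in crossing) 2 <= _).
  apply: leq_sum => S; rewrite inE => /existsP [u /existsP [v /and3P [_ /eqP -> _]]].
  by rewrite cards2; case: (u != v).
by rewrite sum_nat_const mulnC.
Qed.

Lemma tree_partition_of_rooted K k (D : pdata 'I_n) :
  rooted_partition bag_rel K setT set0 D -> (forall t, #|X t| <= k) ->
  tpw_le e (bag_cap K * k).
Proof.
case: D => f par rk rho [/= f_idem _ _ par_rep f_edge part_small] X_small.
pose q y := if (f y == y) && (y != rho) then par y else rho.
pose rk' y := if y == rho then 0 else if f y == y then (rk y).+1 else 1.
have rk_q y : y != rho -> rk' (q y) < rk' y.
  move=> yr; rewrite /q /rk' (negbTE yr).
  case: (eqVneq (f y) y) => [fy|fy] /=; last by rewrite eqxx.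
  have [_ fpar rk_par] := par_rep y (in_setT y) fy yr.
  by case: (eqVneq (par y) rho) => [//|_]; rewrite fpar eqxx.
have ff x : f (f x) = f x by have [] := f_idem x (in_setT x).
pose Y (t : 'I_n) := [set v | f (bag_of v) == t].
exists n, (prel rho q), Y; split; last first.
  apply/bigmax_leqP => t _.
  apply: leq_trans (_ : #|\bigcup_(x in [set x | f x == t]) X x| <= _).
    apply/subset_leq_card/subsetP => v; rewrite inE => fv.
    by apply/bigcupP; exists (bag_of v); rewrite ?inE ?bag_ofP.
  apply: leq_trans (card_bigcup_leK _ X_small) _; rewrite leq_mul2r.
  apply/orP; right; apply: leq_trans (part_small t); apply: subset_leq_card.
  by apply/subsetP => x; rewrite !inE.
split; first split.
- exact: prel_tree rk_q.
- move=> t1 t2 ne; rewrite disjoints_subset; apply/subsetP => v.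
  by rewrite !inE => /eqP E1; apply: contra ne => /eqP <-; rewrite E1.
- by move=> v; exists (f (bag_of v)); rewrite inE.
move=> u v t1 t2 euv; rewrite !inE => /eqP <- /eqP <-.
case: (eqVneq (bag_of u) (bag_of v)) => [->|ne]; first by left.
have huv : bag_rel (bag_of u) (bag_of v).
  by rewrite /bag_rel ne; apply/existsP; exists u; apply/existsP; exists v; rewrite euv !bag_ofP.
case: (f_edge _ _ (in_setT _) (in_setT _) huv) => [->|[ne1 pe]|[ne1 pe]]; [by left|right|right].
  by rewrite /prel /q !ff !eqxx ne1 /= pe eqxx.
by rewrite /prel /q !ff !eqxx ne1 /= pe eqxx orbT.
Qed.

End Decomposition.

Definition tpw_bound (k : nat) : nat := bag_cap (2 * k) * k.

Lemma tpw_le_of_ecrw_le (V : finType) (e : rel V) (k : nat) :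
  symmetric e -> ecrw_le e k -> tpw_le e (tpw_bound k).
Proof.
move=> e_sym [n [a [X [[tree_a X_disj X_cover] width]]]].
have [r [p [d [p_root d_root d_parent a_prel]]]] := tree_rooted tree_a.
have cross_k t : cross e a X t <= k.
  by apply: leq_trans width; apply: leq_trans (leq_maxl _ _); exact: (leq_bigmax t).
have X_small t : #|X t| <= k.
  by apply: leq_trans width; apply: leq_trans (leq_maxr _ _); exact: (leq_bigmax t).
have crossers_small z : #|crossers p d (bag_rel e X) z| <= 2 * k.
  apply: leq_trans (card_crossers_cross e r X_disj X_cover z d_root d_parent a_prel) _.
  by rewrite leq_mul2l cross_k orbT.
have no_root : #|set0 : {set 'I_n}| <= root_cap (2 * k) by rewrite cards0.
have [D partD] := rooted_partition_exists p_root d_root d_parent (bag_rel_sym X e_sym)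
  crossers_small (sub0set setT) no_root.
exact: (tree_partition_of_rooted r X_cover partD X_small).
Qed.

(* A tree-partition has crossing number 0. *)
Lemma ecrw_le_of_tpw_le (V : finType) (e : rel V) (k : nat) : tpw_le e k -> ecrw_le e k.
Proof.
move=> [n [a [X [[tcd part] thick]]]]; exists n, a, X; split => //.
rewrite /ec_width geq_max thick andbT; apply/bigmax_leqP => t _.
apply: leq_trans (_ : cross e a X t <= 0) (leq0n k).
rewrite /cross leqn0 cards_eq0; apply/eqP/setP => S; rewrite !inE.
apply/negbTE/negP => /existsP [u /existsP [v /and3P [euv _ uv_cross]]].
move: uv_cross => /existsP [s1 /existsP [s2 /and5P [us1 vs2 s1t s2t not_conn]]].
case: (part u v s1 s2 euv us1 vs2) => [E|as12]; move/negP: not_conn; apply.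
  by rewrite E connect0.
by apply: connect1; rewrite /del_rel as12 s1t s2t.
Qed.

Theorem lemma3p17 :
  exists g : nat -> nat,
    forall (V : finType) (e : rel V), symmetric e -> irreflexive e ->
      tpw e <= g (ecrw e) /\ ecrw e <= tpw e.
Proof.
exists tpw_bound => V e e_sym _.
have ecrw_spec : ecrw_le e (ecrw e).
  by rewrite /ecrw; case: ex_minnP => m /boolp.asboolP.
have tpw_spec : tpw_le e (tpw e).
  by rewrite /tpw; case: ex_minnP => m /boolp.asboolP.
split.
  rewrite /tpw; case: ex_minnP => m _; apply; apply/boolp.asboolP.
  exact: tpw_le_of_ecrw_le.
rewrite /ecrw; case: ex_minnP => m _; apply; apply/boolp.asboolP.
exact: ecrw_le_of_tpw_le.
Qed.
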